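(* Let $q$ be a prime power, $a\in\mathbb{F}_q^*$, $n\ge 0$ an integer, and let $y\in\mathbb{F}_{q^2}$ with $y\neq 0$, $y^2\neq a$ and $2y\neq a$. Put $x=y(a-y)$. Then $$F_n(a,x)=\frac{a}{2y-a}\bigl(y^n-(a-y)^n\bigr).$$
   Context: For an integer $n\ge 1$, the $n$-th reversed Dickson polynomial of the third kind is $F_n(a,x)=\sum_{i=0}^{\lfloor n/2\rfloor}\frac{n-2i}{n-i}\binom{n-i}{i}(-x)^i a^{n-2i}$, where each coefficient $\frac{n-2i}{n-i}\binom{n-i}{i}$ is an integer (read in the field), and $F_0(a,x)=0$. *)

From HB Require Import structures.
From mathcomp Require Import all_boot all_order all_algebra all_field.
Set Implicit Arguments. Unset Strict Implicit. Unset Printing Implicit Defensive.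
Import GRing.Theory.
Local Open Scope ring_scope.

(* The integer coefficient (n-2i)/(n-i) * C(n-i,i), computed in nat
   (the division is exact for n >= 1, 0 <= i <= n/2; for n = 0 it gives 0). *)
Definition dickson3_coef (n i : nat) : nat :=
  (((n - 2 * i) * 'C(n - i, i)) %/ (n - i))%N.

Definition revDickson3 (R : nzRingType) (n : nat) (a x : R) : R :=
  if n == 0%N then 0 else
  \sum_(i < (n./2).+1) (dickson3_coef n i)%:R * (- x) ^+ i * a ^+ (n - 2 * i).

From HB Require Import structures.
From mathcomp Require Import all_boot all_order all_algebra all_field.
From mathcomp Require Import zify ring.
Set Implicit Arguments. Unset Strict Implicit. Unset Printing Implicit Defensive.
Import GRing.Theory.
Local Open Scope ring_scope.

(* F_{n+1}(a,x) = a E_n(a,x), where E_n is the reversed Dickson polynomial of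
   the second kind.  E_n satisfies E_{n+2} = a E_{n+1} - x E_n with E_0 = 1 and
   E_1 = a, so for a = y + z and x = y z it is the complete homogeneous sum
   (y^{n+1} - z^{n+1}) / (y - z).  Taking z = a - y gives the claim. *)

Lemma bin_subSS (m j : nat) :
  'C(m.+1 - j, j.+1) = ('C(m - j, j.+1) + 'C(m - j, j))%N.
Proof.
case: (leqP j m) => [le_jm | lt_mj]; first by rewrite subSn // binS.
have -> : (m.+1 - j = 0)%N by lia.
have -> : (m - j = 0)%N by lia.
by rewrite !bin0n; case: j lt_mj.
Qed.

Lemma dickson3_coefE (m i : nat) : (2 * i <= m.+1)%N ->
  dickson3_coef m.+1 i = 'C(m - i, i).
Proof.
move=> le_2i_m; rewrite /dickson3_coef.
have := mul_bin_down (m.+1 - i) i.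
have -> : ((m.+1 - i).-1 = m - i)%N by lia.
have -> : (m.+1 - i - i = m.+1 - 2 * i)%N by lia.
by move<-; rewrite mulKn //; lia.
Qed.

Lemma big_ord_trunc (R : nmodType) (N M : nat) (F : nat -> R) :
  (N <= M)%N -> (forall i, (N <= i)%N -> F i = 0) ->
  \sum_(i < M) F i = \sum_(i < N) F i.
Proof.
move=> le_NM F0; rewrite (big_ord_widen _ _ le_NM) [RHS]big_mkcond /=.
by apply: eq_bigr => i _; case: ltnP => // /F0.
Qed.

Section RevDickson2.
Variables (R : comNzRingType) (a x : R).

Definition revDickson2_term (m i : nat) : R :=
  'C(m - i, i)%:R * (- x) ^+ i * a ^+ (m - 2 * i).

Definition revDickson2 (m : nat) : R := \sum_(i < m./2.+1) revDickson2_term m i.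

Lemma revDickson2_term_eq0 (m i : nat) : (m < 2 * i)%N -> revDickson2_term m i = 0.
Proof. by move=> lt_m_2i; rewrite /revDickson2_term bin_small ?mul0r //; lia. Qed.

Lemma revDickson2E (m M : nat) : (m./2 < M)%N ->
  revDickson2 m = \sum_(i < M) revDickson2_term m i.
Proof.
move=> lt_half_M; rewrite [RHS](big_ord_trunc lt_half_M) // => i.
by rewrite ltn_half_double -muln2 mulnC => /revDickson2_term_eq0.
Qed.

Lemma revDickson2_termSS (m j : nat) :
  revDickson2_term m.+2 j.+1 =
  a * revDickson2_term m.+1 j.+1 - x * revDickson2_term m j.
Proof.
rewrite /revDickson2_term.
have -> : (m.+2 - j.+1 = m.+1 - j)%N by lia.
have -> : (m.+1 - j.+1 = m - j)%N by lia.
have -> : (m.+2 - 2 * j.+1 = m - 2 * j)%N by lia.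
rewrite bin_subSS natrD.
case: (leqP (2 * j).+1 m) => [lt_2j_m | le_m_2j].
  have -> : (m - 2 * j = (m.+1 - 2 * j.+1).+1)%N by lia.
  by rewrite !exprS; ring.
rewrite (bin_small (n := m - j)); last lia.
by rewrite !exprS; ring.
Qed.

Lemma revDickson2SS (m : nat) :
  revDickson2 m.+2 = a * revDickson2 m.+1 - x * revDickson2 m.
Proof.
rewrite (revDickson2E (m := m) (M := m.+2)); last by rewrite ltn_half_double; lia.
rewrite !(revDickson2E (M := m.+3)); try by rewrite ltn_half_double; lia.
rewrite !(big_ord_recl m.+2) mulrDr mulr_sumr mulr_sumr -addrA -sumrN -big_split /=.
congr (_ + _); last by apply: eq_bigr => j _; exact: revDickson2_termSS.
by rewrite /revDickson2_term !muln0 !subn0 !bin0 !expr0 !mul1r exprS.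
Qed.

Lemma revDickson2_0 : revDickson2 0 = 1.
Proof. by rewrite /revDickson2 big_ord1 /revDickson2_term muln0 subn0 bin0 !expr0 !mulr1. Qed.

Lemma revDickson2_1 : revDickson2 1 = a.
Proof. by rewrite /revDickson2 big_ord1 /revDickson2_term muln0 !subn0 bin0 expr0 mulr1 mul1r. Qed.

End RevDickson2.

Lemma revDickson2_subrXX (R : comNzRingType) (y z : R) (m : nat) :
  (y - z) * revDickson2 (y + z) (y * z) m = y ^+ m.+1 - z ^+ m.+1.
Proof.
suff [] : (y - z) * revDickson2 (y + z) (y * z) m = y ^+ m.+1 - z ^+ m.+1 /\
  (y - z) * revDickson2 (y + z) (y * z) m.+1 = y ^+ m.+2 - z ^+ m.+2 by [].
elim: m => [|m [IHm IHmS]].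
  by rewrite revDickson2_0 revDickson2_1; split; ring.
split=> //; rewrite revDickson2SS mulrBr !(mulrCA (y - z)) IHmS IHm.
by rewrite !exprS; ring.
Qed.

Lemma revDickson3S (R : comNzRingType) (a x : R) (m : nat) :
  revDickson3 m.+1 a x = a * revDickson2 a x m.
Proof.
rewrite /revDickson3 /= (revDickson2E _ _ (M := (m.+1)./2.+1)); last first.
  by rewrite ltnS half_leq.
rewrite mulr_sumr; apply: eq_bigr => -[i /= lt_i_half] _.
have le_2i_mS : (2 * i <= m.+1)%N.
  by move: lt_i_half; rewrite -[uphalf m]/(m.+1)./2 ltnS geq_half_double -muln2 mulnC.
rewrite dickson3_coefE // /revDickson2_term.
case: (leqP (2 * i) m) => [le_2i_m | lt_m_2i]; first by rewrite subSn // exprS; ring.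
by rewrite bin_small ?mul0r ?mulr0 //; lia.
Qed.

Theorem lemma2p2 (q : nat) (K : finFieldType) (hq : prime (pdiv q))
  (hqpow : q = (pdiv q ^ logn (pdiv q) q)%N)
  (hK : #|K| = (q ^ 2)%N)
  (a : K) (haq : a ^+ q = a) (ha0 : a != 0) (n : nat) (y : K)
  (hy0 : y != 0) (hy2 : y ^+ 2 != a) (hy2a : 2%:R * y != a) :
  revDickson3 n a (y * (a - y)) = a / (2%:R * y - a) * (y ^+ n - (a - y) ^+ n).
Proof.
case: n => [|m]; first by rewrite /revDickson3 /= subrr mulr0.
have y_sub_z : y - (a - y) = 2%:R * y - a by ring.
rewrite revDickson3S -[in revDickson2 a](subrKC y a) -revDickson2_subrXX y_sub_z.
by rewrite mulrA divfK // subr_eq0.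
Qed.
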